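(* Assume the setting described in the context, assume $(L-1)\mathfrak m\neq0$, let $\xi=(\xi_1,\dots,\xi_{\ell_L})\in\mathbb R^{\ell_L}$ satisfy $\xi_1=\mathfrak m^{-1}\int_{[a,b]^{\ell_0}}f_1(x)\,\mu(dx)$, for $i,j\in\mathbb N_0$, $k\in\mathbb N$ let $\alpha_{i,j,k}=i\ell_{k-1}+j+\sum_{h=1}^{k-1}\ell_h(\ell_{h-1}+1)$, and let $\theta=(\theta_1,\dots,\theta_{\mathfrak d})$, $\vartheta=(\vartheta_1,\dots,\vartheta_{\mathfrak d})\in\mathbb R^{\mathfrak d}$ satisfy for all $i\in\{1,\dots,\ell_L\}$ and all $j\in\{1,\dots,\mathfrak d\}\setminus\big(\bigcup_{k=1}^{\ell_L}\{\alpha_{\ell_{L-1},1,L-1},\alpha_{0,1,L},\alpha_{\ell_L,k,L}\}\big)$ that $\theta_{\alpha_{\ell_{L-1},1,L-1}}=\vartheta_{\alpha_{0,1,L}}=1$, $\theta_{\alpha_{\ell_L,i,L}}=\vartheta_{\alpha_{\ell_L,i,L}}=\xi_i$, and $\theta_{\alpha_{0,1,L}}=\vartheta_{\alpha_{\ell_{L-1},1,L-1}}=\theta_j=\vartheta_j=0$. Then $$\mathcal L_\infty\Big(\frac{\theta+\vartheta}2\Big)=\Big[\frac{\mathcal L_\infty(\theta)+\mathcal L_\infty(\vartheta)}2\Big]+\frac{\mathfrak m}{16}>\frac{\mathcal L_\infty(\theta)+\mathcal L_\infty(\vartheta)}2.$$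
   Context: Setting. Let $L,\mathfrak d\in\mathbb N=\{1,2,\dots\}$, $(\ell_k)_{k\in\mathbb N_0}\subseteq\mathbb N$, $a\in\mathbb R$, $b\in(a,\infty)$ with $\mathfrak d=\sum_{k=1}^L\ell_k(\ell_{k-1}+1)$; let $\mathbf d_k=\sum_{h=1}^k\ell_h(\ell_{h-1}+1)$ for $k\in\mathbb N_0$. For $\theta=(\theta_1,\dots,\theta_{\mathfrak d})\in\mathbb R^{\mathfrak d}$, $k\in\{1,\dots,L\}$, $i\in\{1,\dots,\ell_k\}$, $j\in\{1,\dots,\ell_{k-1}\}$ let $\mathfrak w^{k,\theta}_{i,j}=\theta_{(i-1)\ell_{k-1}+j+\mathbf d_{k-1}}$ and $\mathfrak b^{k,\theta}_i=\theta_{\ell_k\ell_{k-1}+i+\mathbf d_{k-1}}$, let $\mathfrak w^{k,\theta}=(\mathfrak w^{k,\theta}_{i,j})_{i,j}\in\mathbb R^{\ell_k\times\ell_{k-1}}$, $\mathfrak b^{k,\theta}=(\mathfrak b^{k,\theta}_1,\dots,\mathfrak b^{k,\theta}_{\ell_k})\in\mathbb R^{\ell_k}$, and $\mathcal A^\theta_k(x)=\mathfrak b^{k,\theta}+\mathfrak w^{k,\theta}x$. Let $\mathfrak M_\infty(x_1,\dots,x_n)=(\max\{x_1,0\},\dots,\max\{x_n,0\})$ and $\|\cdot\|$ the Euclidean norm. Define $\mathcal N^{k,\theta}_\infty\colon\mathbb R^{\ell_0}\to\mathbb R^{\ell_k}$, $k\in\{1,\dots,L\}$, by $\mathcal N^{1,\theta}_\infty=\mathcal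 A^\theta_1$ and $\mathcal N^{k+1,\theta}_\infty(x)=\mathcal A^\theta_{k+1}(\mathfrak M_\infty(\mathcal N^{k,\theta}_\infty(x)))$. Let $\mu$ be a measure on the Borel $\sigma$-algebra of $[a,b]^{\ell_0}$ with $\mathfrak m=\mu([a,b]^{\ell_0})\in\mathbb R$, let $f=(f_1,\dots,f_{\ell_L})\colon[a,b]^{\ell_0}\to\mathbb R^{\ell_L}$ be measurable, and let $\mathcal L_\infty\colon\mathbb R^{\mathfrak d}\to\mathbb R$, $\mathcal L_\infty(\theta)=\int_{[a,b]^{\ell_0}}\|\mathcal N^{L,\theta}_\infty(x)-f(x)\|^2\,\mu(dx)$ (these integrals are real numbers as part of the setting). *)

From HB Require Import structures.
From mathcomp Require Import all_boot all_order all_algebra.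
From mathcomp Require Import all_classical all_reals all_analysis.
Set Implicit Arguments. Unset Strict Implicit. Unset Printing Implicit Defensive.
Import Order.TTheory GRing.Theory Num.Theory.
Import numFieldNormedType.Exports.
Local Open Scope ring_scope.
Local Open Scope classical_set_scope.

Section Defs.
Variable R : realType.

Definition borelRV (n : nat) := g_sigma_algebraType [set U : set 'rV[R]_n | open U].

(** 1-based coordinate access: [vc v i] = v_i for i in {1,..,n}, 0 otherwise. *)
Definition vc (n : nat) (v : 'rV[R]_n) (i : nat) : R :=
  oapp (fun j : 'I_n => v ord0 j) 0 (insub i.-1).

Variable ell : nat -> nat.

Definition dsum (k : nat) : nat := (\sum_(1 <= h < k.+1) ell h * (ell h.-1 + 1))%N.

Definition alpha (i j k : nat) : nat := (i * ell k.-1 + j + dsum k.-1)%N.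

Variable dd : nat.
Variable theta : 'rV[R]_dd.

Definition wgt (k i j : nat) : R := vc theta ((i - 1) * ell k.-1 + j + dsum k.-1).
Definition bias (k i : nat) : R := vc theta (ell k * ell k.-1 + i + dsum k.-1).

(** A_k(y) = b^k + w^k y, vectors as 1-indexed functions nat -> R *)
Definition Aff (k : nat) (y : nat -> R) : nat -> R :=
  fun i => bias k i + \sum_(1 <= j < (ell k.-1).+1) wgt k i j * y j.

Fixpoint Nnet (k : nat) (x : nat -> R) : nat -> R :=
  match k with
  | 0 => x
  | k'.+1 => Aff k'.+1 (match k' with
                        | 0 => x
                        | _ => fun j => Num.max (Nnet k' x j) 0
                        end)
  end.

Definition sqerr (L : nat) (f : 'rV[R]_(ell 0) -> 'rV[R]_(ell L))
  (x : 'rV[R]_(ell 0)) : R :=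
  \sum_(1 <= i < (ell L).+1) (Nnet L (vc x) i - vc (f x) i) ^+ 2.

End Defs.

Definition cube (R : realType) (n : nat) (a b : R) : set 'rV[R]_n :=
  [set x | forall i : 'I_n, a <= x ord0 i <= b].

Definition Linf (R : realType) (ell : nat -> nat) (dd L : nat) (a b : R)
  (mu : {measure set (borelRV R (ell 0)) -> \bar R})
  (f : 'rV[R]_(ell 0) -> 'rV[R]_(ell L)) (theta : 'rV[R]_dd) : R :=
  Rintegral mu (cube a b : set (borelRV R (ell 0))) (@sqerr R ell dd theta L f).

From HB Require Import structures.
From mathcomp Require Import all_boot all_order all_algebra.
From mathcomp Require Import all_classical all_reals all_analysis.
From mathcomp Require Import measurable_realfun zify ring lra.
Set Implicit Arguments. Unset Strict Implicit. Unset Printing Implicit Defensive.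
Import Order.TTheory GRing.Theory Num.Theory.
Import numFieldNormedType.Exports.
Local Open Scope ring_scope.
Local Open Scope classical_set_scope.

(* Apart from the output biases, which both set to xi, theta and vartheta
   vanish except on the single path from the first neuron of layer L-1 to the
   first output: theta cuts it through the weight w^L_{1,1} = 0, vartheta
   through the bias b^{L-1}_1 = 0.  Hence both networks realise the constant
   xi and have the same loss.  Their midpoint opens the path with bias and
   weight 1/2 and realises xi + e_1/4.  Since xi_1 is the mu-mean of f_1, the
   cross term of (xi_1 + 1/4 - f_1)^2 - (xi_1 - f_1)^2 integrates to zero, and
   the loss grows by exactly (1/4)^2 m = m/16. *)

Lemma cube_measurable (R : realType) (n : nat) (a b : R) :
  measurable (cube a b : set (borelRV R n)).
Proof.
have cube_closed : closed (cube a b : set 'rV[R]_n).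
  have -> : cube a b =
      \bigcap_(i in [set: 'I_n]) ((fun x : 'rV[R]_n => x ord0 i) @^-1` `[a, b]).
    apply/seteqP; split => x /= hx i; first by move=> _; rewrite /= in_itv hx.
    by have := hx i I; rewrite /= in_itv.
  apply: closed_bigI => i _; apply: preimage_closed; last exact: itv_closed.
  by move=> x _; exact: coord_continuous.
rewrite -[X in measurable X]setCK; apply: measurableC.
by apply: sub_sigma_algebra; exact: closed_openC.
Qed.

Lemma vcD (R : realType) (n : nat) (u v : 'rV[R]_n) (i : nat) :
  vc (u + v) i = vc u i + vc v i.
Proof. by rewrite /vc; case: insubP => [j _ _|_] /=; rewrite ?mxE ?addr0. Qed.

Lemma vcZ (R : realType) (n : nat) (k : R) (u : 'rV[R]_n) (i : nat) :
  vc (k *: u) i = k * vc u i.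
Proof. by rewrite /vc; case: insubP => [j _ _|_] /=; rewrite ?mxE ?mulr0. Qed.

Lemma dsumS (ell : nat -> nat) (k : nat) :
  dsum ell k.+1 = (dsum ell k + ell k.+1 * (ell k + 1))%N.
Proof. by rewrite /dsum big_nat_recr. Qed.

Lemma Nnet_Aff (R : realType) (ell : nat -> nat) (dd : nat) (p : 'rV[R]_dd)
    (k : nat) (x : nat -> R) :
  exists y, Nnet ell p k.+1 x = Aff ell p k.+1 y.
Proof. by case: k => [|k]; eexists. Qed.

Lemma NnetSS (R : realType) (ell : nat -> nat) (dd : nat) (p : 'rV[R]_dd)
    (k : nat) (x : nat -> R) :
  Nnet ell p k.+2 x = Aff ell p k.+2 (fun j => Num.max (Nnet ell p k.+1 x j) 0).
Proof. by []. Qed.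

Section OnePathNetwork.
Variables (R : realType) (ell : nat -> nat) (K : nat).
Hypothesis ell_gt0 : forall k, (0 < ell k)%N.

(* With L = K.+2: every index except those of b^{L-1}_1, w^L_{1,1} and the
   output biases b^L_k. *)
Definition off_path (j : nat) : Prop :=
  [/\ (1 <= j <= dsum ell K.+2)%N, j != alpha ell (ell K.+1) 1 K.+1,
      j != alpha ell 0 1 K.+2 &
      forall k, (1 <= k <= ell K.+2)%N -> j != alpha ell (ell K.+2) k K.+2].

Variable xi : 'rV[R]_(ell K.+2).

Definition one_path_param (p : 'rV[R]_(dsum ell K.+2)) : Prop :=
  (forall j, off_path j -> vc p j = 0) /\
  forall i, (1 <= i <= ell K.+2)%N ->
    vc p (alpha ell (ell K.+2) i K.+2) = vc xi i.

Definition path_output (p : 'rV[R]_(dsum ell K.+2)) : R :=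
  vc p (alpha ell 0 1 K.+2) * Num.max (vc p (alpha ell (ell K.+1) 1 K.+1)) 0.

Local Ltac solve_off_path :=
  have := ell_gt0 K; have := ell_gt0 K.+1; have := ell_gt0 K.+2;
  rewrite /off_path /alpha /= !dsumS;
  split; try move=> k hk; try apply/eqP; nia.

Lemma off_path_hidden_weight (j j' : nat) :
  (1 <= j <= ell K.+1)%N -> (1 <= j' <= ell K)%N ->
  off_path ((j - 1) * ell K + j' + dsum ell K).
Proof.
by move=> hj hj'; solve_off_path.
Qed.

Lemma off_path_hidden_bias (j : nat) :
  (2 <= j <= ell K.+1)%N -> off_path (ell K.+1 * ell K + j + dsum ell K).
Proof.
by move=> hj; solve_off_path.
Qed.

Lemma off_path_output_weight (i : nat) :
  (2 <= i <= ell K.+2)%N -> off_path ((i - 1) * ell K.+1 + 1 + dsum ell K.+1).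
Proof.
by move=> hi; solve_off_path.
Qed.

Definition sqerr_shift (f : 'rV[R]_(ell 0) -> 'rV[R]_(ell K.+2)) (t : R)
    (x : 'rV[R]_(ell 0)) : R :=
  (vc xi 1 + t - vc (f x) 1) ^+ 2
  + \sum_(2 <= i < (ell K.+2).+1) (vc xi i - vc (f x) i) ^+ 2.

Lemma one_path_param_midpoint (p q : 'rV[R]_(dsum ell K.+2)) :
  one_path_param p -> one_path_param q ->
  one_path_param ((2 : R)^-1 *: (p + q)).
Proof.
move=> [p_off p_bias] [q_off q_bias]; split => [j hj|i hi]; rewrite vcZ vcD.
  by rewrite p_off // q_off // addr0 mulr0.
by rewrite p_bias // q_bias //; lra.
Qed.

Variable p : 'rV[R]_(dsum ell K.+2).
Hypothesis p_one_path : one_path_param p.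

Lemma Nnet_hidden (x : nat -> R) (j : nat) : (1 <= j <= ell K.+1)%N ->
  Nnet ell p K.+1 x j =
    if j == 1%N then vc p (alpha ell (ell K.+1) 1 K.+1) else 0.
Proof.
move=> hj; have [p_off _] := p_one_path; have [y ->] := Nnet_Aff ell p K x.
rewrite /Aff -[K.+1.-1]/K big1_seq ?addr0 => [|j' /andP[_]]; last first.
  rewrite mem_index_iota => hj'.
  by rewrite /wgt p_off ?mul0r //; apply: off_path_hidden_weight; lia.
case: eqP => [-> //|/eqP j_neq1].
by rewrite /bias p_off //; apply: off_path_hidden_bias; lia.
Qed.

Lemma Nnet_output (x : nat -> R) (i : nat) : (1 <= i <= ell K.+2)%N ->
  Nnet ell p K.+2 x i = vc xi i + (i == 1%N)%:R * path_output p.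
Proof.
move=> hi; have [p_off p_bias] := p_one_path.
rewrite NnetSS /Aff -[K.+2.-1]/K.+1 big_ltn ?ltnS //.
rewrite big1_seq ?addr0 => [|j /andP[_]]; last first.
  rewrite mem_index_iota => hj.
  rewrite Nnet_hidden; last lia.
  by case: eqP => [?|_]; [lia|rewrite maxxx mulr0].
have -> : bias ell p K.+2 i = vc xi i by exact: p_bias.
rewrite Nnet_hidden ?ell_gt0 // eqxx; congr (_ + _).
case: eqP => [->|/eqP i_neq1]; first by rewrite mul1r.
by rewrite /wgt p_off ?mul0r //; apply: off_path_output_weight; lia.
Qed.

Lemma sqerr_one_path (f : 'rV[R]_(ell 0) -> 'rV[R]_(ell K.+2))
    (x : 'rV[R]_(ell 0)) :
  sqerr p f x = sqerr_shift f (path_output p) x.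
Proof.
rewrite /sqerr /sqerr_shift big_ltn ?ltnS ?ell_gt0 //.
rewrite Nnet_output ?ell_gt0 // eqxx mul1r; congr (_ + _).
apply: eq_big_nat => i hi; rewrite Nnet_output; last lia.
have /negPf -> : i != 1%N by lia.
by rewrite mul0r addr0.
Qed.

End OnePathNetwork.

Section MeanShift.
Variables (d : measure_display) (T : measurableType d) (R : realType).
Variables (mu : {measure set T -> \bar R}) (D : set T) (m : R).
Hypotheses (mD : measurable D) (muD : mu D = m%:E).

Lemma integrable_cst_finite (k : R) : mu.-integrable D (EFin \o cst k).
Proof.
apply/integrableP; split; first exact/measurable_EFinP/measurable_cst.
rewrite (eq_integral (cst `|k|%:E)); last by move=> x _; rewrite /= ?abse_EFin.
by rewrite integral_cst // muD -EFinM ltry.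
Qed.

Lemma Rintegral_sq_shift_mean (h : T -> R) (c s : R) :
  mu.-integrable D (EFin \o (fun x => (c + s - h x) ^+ 2 - (c - h x) ^+ 2)) ->
  \int[mu]_(x in D) h x = c * m ->
  \int[mu]_(x in D) ((c + s - h x) ^+ 2 - (c - h x) ^+ 2) = s ^+ 2 * m.
Proof.
move=> diff_int h_mean.
have [->|s_neq0] := eqVneq s 0.
  under eq_Rintegral do rewrite addr0 subrr.
  by rewrite Rintegral_cst // expr0n !mul0r.
have diff_affine x :
    (c + s - h x) ^+ 2 - (c - h x) ^+ 2 = s * (2 * c + s) - 2 * s * h x.
  by ring.
(* The difference of squares is affine in [h x], so [h] is integrable. *)
have h_int : mu.-integrable D (EFin \o h).
  apply: (eq_integrable mD _ _ _ (integrableZl mD (2 * s)^-1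
    (integrableB mD (integrable_cst_finite (s * (2 * c + s))) diff_int)))
    => x _.
  by rewrite /= -EFinB -EFinM diff_affine; congr EFin; field.
have sh_int : mu.-integrable D (EFin \o (fun x => 2 * s * h x)).
  apply: (eq_integrable mD _ _ _ (integrableZl mD (2 * s) h_int)) => x _.
  by rewrite /= EFinM.
under eq_Rintegral do rewrite diff_affine.
rewrite RintegralB // ?integrable_cst_finite // Rintegral_cst // RintegralZl //.
by rewrite muD h_mean /=; ring.
Qed.

End MeanShift.

Lemma Linf_one_path_shift (R : realType) (ell : nat -> nat) (K : nat) (a b : R)
    (mu : {measure set (borelRV R (ell 0)) -> \bar R}) (m : R)
    (f : 'rV[R]_(ell 0) -> 'rV[R]_(ell K.+2)) (xi : 'rV[R]_(ell K.+2))
    (p q : 'rV[R]_(dsum ell K.+2)) :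
  (forall k, (0 < ell k)%N) ->
  mu (cube a b : set (borelRV R (ell 0))) = m%:E ->
  \int[mu]_(x in (cube a b : set (borelRV R (ell 0)))) vc (f x) 1
    = vc xi 1 * m ->
  mu.-integrable (cube a b : set (borelRV R (ell 0)))
    (fun x => (sqerr p f x)%:E) ->
  mu.-integrable (cube a b : set (borelRV R (ell 0)))
    (fun x => (sqerr q f x)%:E) ->
  one_path_param xi p -> one_path_param xi q -> path_output p = 0 ->
  Linf a b mu f q = Linf a b mu f p + path_output q ^+ 2 * m.
Proof.
move=> ell_gt0 muD f_mean p_int q_int hp hq p_out0.
set D := (cube a b : set (borelRV R (ell 0))).
have mD : measurable D by exact: cube_measurable.
have sqerr_diff x : sqerr q f x - sqerr p f x =
    (vc xi 1 + path_output q - vc (f x) 1) ^+ 2 - (vc xi 1 - vc (f x) 1) ^+ 2.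
  rewrite (sqerr_one_path ell_gt0 hp) (sqerr_one_path ell_gt0 hq) p_out0.
  by rewrite /sqerr_shift; ring.
rewrite -[Linf _ _ _ _ q](subrK (Linf a b mu f p)) addrC; congr (_ + _).
rewrite /Linf -/D -RintegralB //.
under eq_Rintegral do rewrite sqerr_diff.
apply: Rintegral_sq_shift_mean => //.
apply: (eq_integrable mD _ _ _ (integrableB mD q_int p_int)) => x _.
by rewrite /= -EFinB sqerr_diff.
Qed.

Theorem corollary2p18 (R : realType) (L : nat) (ell : nat -> nat) (dd : nat)
  (a b : R)
  (hL : (0 < L)%N) (hell : forall k : nat, (0 < ell k)%N)
  (hdd : dd = dsum ell L) (hab : a < b)
  (mu : {measure set (borelRV R (ell 0)) -> \bar R}) (m : R)
  (hm : mu (cube a b : set (borelRV R (ell 0))) = m%:E)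
  (f : 'rV[R]_(ell 0) -> 'rV[R]_(ell L))
  (hf : forall i : 'I_(ell L),
      measurable_fun (cube a b : set (borelRV R (ell 0))) (fun x => f x ord0 i))
  (hint : forall th : 'rV[R]_dd,
      mu.-integrable (cube a b : set (borelRV R (ell 0)))
        (fun x => (@sqerr R ell dd th L f x)%:E))
  (hLm : (L - 1)%N%:R * m != 0)
  (xi : 'rV[R]_(ell L))
  (hxi : vc xi 1 = m^-1 * Rintegral mu (cube a b : set (borelRV R (ell 0)))
                                (fun x => vc (f x) 1))
  (theta vartheta : 'rV[R]_dd)
  (hth1 : vc theta (alpha ell (ell (L - 1)%N) 1 (L - 1)%N) = 1)
  (hvth1 : vc vartheta (alpha ell 0 1 L) = 1)
  (hxith : forall i : nat, (1 <= i <= ell L)%N ->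
      vc theta (alpha ell (ell L) i L) = vc xi i /\
      vc vartheta (alpha ell (ell L) i L) = vc xi i)
  (hth0 : vc theta (alpha ell 0 1 L) = 0)
  (hvth0 : vc vartheta (alpha ell (ell (L - 1)%N) 1 (L - 1)%N) = 0)
  (hzero : forall j : nat, (1 <= j <= dd)%N ->
      j != alpha ell (ell (L - 1)%N) 1 (L - 1)%N ->
      j != alpha ell 0 1 L ->
      (forall k : nat, (1 <= k <= ell L)%N -> j != alpha ell (ell L) k L) ->
      vc theta j = 0 /\ vc vartheta j = 0) :
  let Loss := @Linf R ell dd L a b mu f in
  Loss ((2 : R)^-1 *: (theta + vartheta))
    = (Loss theta + Loss vartheta) / 2 + m / 16 /\
  (Loss theta + Loss vartheta) / 2 + m / 16 > (Loss theta + Loss vartheta) / 2.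
Proof.
move=> Loss.
have [K eL] : exists K, L = K.+2.
  exists (L - 2)%N; move: hLm; case: (ltnP 1 L) => [?|L_le1]; first lia.
  have -> : (L - 1 = 0)%N by lia.
  by rewrite mul0r eqxx.
subst L dd; rewrite -[(K.+2 - 1)%N]/K.+1 in hth1 hvth0 hzero.
have m_neq0 : m != 0 by apply: contraNneq hLm => ->; rewrite mulr0.
have m_gt0 : 0 < m by rewrite lt_neqAle eq_sym m_neq0 -lee_fin -hm measure_ge0.
have f_mean : \int[mu]_(x in (cube a b : set (borelRV R (ell 0)))) vc (f x) 1
    = vc xi 1 * m by rewrite hxi [_ * m]mulrC mulVKf.
have th_path : one_path_param xi theta.
  by split=> [j [hj n1 n2 n3]|i /hxith[]//]; have [] := hzero j hj n1 n2 n3.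
have vth_path : one_path_param xi vartheta.
  by split=> [j [hj n1 n2 n3]|i /hxith[]//]; have [] := hzero j hj n1 n2 n3.
have out_th : path_output theta = 0 by rewrite /path_output hth0 mul0r.
have out_vth : path_output vartheta = 0.
  by rewrite /path_output hvth0 maxxx mulr0.
have out_mid : path_output ((2 : R)^-1 *: (theta + vartheta)) = 4^-1.
  rewrite /path_output !vcZ !vcD hth0 hvth1 hth1 hvth0 add0r addr0 mulr1.
  by rewrite max_l ?invr_ge0 ?ler0n //; field.
have Loss_shift q :=
  Linf_one_path_shift hell hm f_mean (hint theta) (hint q) th_path.
have Loss_vth : Loss vartheta = Loss theta.
  by rewrite /Loss (Loss_shift _ vth_path out_th) out_vth expr0n mul0r addr0.
have Loss_mid : Loss ((2 : R)^-1 *: (theta + vartheta)) = Loss theta + m / 16.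
  have mid_path := one_path_param_midpoint th_path vth_path.
  by rewrite /Loss (Loss_shift _ mid_path out_th) out_mid; congr (_ + _); field.
by rewrite Loss_mid Loss_vth; split; [field | lra].
Qed.
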